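(* Let $0<p<1$, $0\le y<1$, and let $n\ge 1$ be an integer. Define $Q(n,y,p)=\sum_{k=0}^\infty (-p\,k)_n(-y)^k$. Then \[ Q(n,y,p)=(-1)^{n+1}\frac{y}{y+1}\sum_{k=1}^n s(n,k)(-p)^k\sum_{m=1}^k S(k,m)\,m!\left(-\frac{1}{y+1}\right)^m =(-1)^{n+1}\frac{y}{y+1}\sum_{k=1}^n s(n,k)(-p)^k\,\omega_k\!\left(-\frac{1}{y+1}\right). \]
   Context: $(x)_n=x(x+1)\cdots(x+n-1)$ is the rising factorial. $s(n,k)$ are the (signed) Stirling numbers of the first kind, defined by $x(x-1)\cdots(x-n+1)=\sum_{k=0}^n s(n,k)x^k$, and $S(k,m)$ are the Stirling numbers of the second kind. The geometric polynomials are $\omega_k(x)=\sum_{m=0}^k S(k,m)\,m!\,x^m$. *)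

From HB Require Import structures.
From mathcomp Require Import all_boot all_order all_algebra.
From mathcomp Require Import all_classical all_reals all_analysis.
Set Implicit Arguments. Unset Strict Implicit. Unset Printing Implicit Defensive.
Import Order.TTheory GRing.Theory Num.Theory.
Local Open Scope ring_scope.

Definition rising {R : ringType} (x : R) (n : nat) : R :=
  \prod_(i < n) (x + i%:R).

(* signed Stirling numbers of the first kind:
   x(x-1)...(x-n+1) = \sum_k s(n,k) x^k *)
Definition stirling1 (n k : nat) : int :=
  (\prod_(i < n) ('X - (i%:R)%:P) : {poly int})`_k.

Fixpoint stirling2 (n m : nat) : nat :=
  match n, m with
  | 0, 0 => 1
  | 0, _.+1 => 0
  | _.+1, 0 => 0
  | n'.+1, m'.+1 => m'.+1 * stirling2 n' m'.+1 + stirling2 n' m'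
  end%N.

Definition geom_poly {R : ringType} (k : nat) (x : R) : R :=
  \sum_(0 <= m < k.+1) (stirling2 k m * m`!)%:R * x ^+ m.

From HB Require Import structures.
From mathcomp Require Import all_boot all_order all_algebra.
From mathcomp Require Import all_classical all_reals all_analysis.
From mathcomp Require Import ring lra.
Set Implicit Arguments.
Unset Strict Implicit.
Unset Printing Implicit Defensive.
Import Order.TTheory GRing.Theory Num.Theory.
Import numFieldNormedType.Exports.
Local Open Scope classical_set_scope.
Local Open Scope ring_scope.

(* Expanding (-pk)_n by the Stirling numbers of the first kind turns Q into a
   combination of the power series sum_k k^j z^k at z = -y.  Expanding k^j by the
   Stirling numbers of the second kind into rising factorials reduces these to
   sum_k (k)_m z^k = m! z / (1 - z)^(m+1) for m >= 1, which follows by induction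
   on m from (k+1)_(m+1) - (k)_(m+1) = (m+1) (k+1)_m; the terms m! z / (1-z)^(m+1)
   then assemble into omega_j(-1/(1-z)).  The same recurrence bounds the partial
   sums at |z|, so the terms tend to 0 and the induction goes through. *)

Lemma stirling1_n0 n : (0 < n)%N -> stirling1 n 0 = 0.
Proof. by case: n => // n _; rewrite /stirling1 big_ord_recl subr0 coefXM. Qed.

Lemma stirling2_small j m : (j < m)%N -> stirling2 j m = 0%N.
Proof.
elim: j m => [|j IHj] [|m] //= ltjm.
by rewrite (IHj m) // (IHj m.+1) ?muln0 // ltnW.
Qed.

Lemma geom_polyE (R : nzRingType) k (x : R) : (0 < k)%N ->
  geom_poly k x = \sum_(1 <= m < k.+1) (stirling2 k m * m`!)%:R * x ^+ m.
Proof. by case: k => // k _; rewrite /geom_poly big_ltn // mul0r add0r. Qed.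

Section Rising.
Context {R : comNzRingType}.
Implicit Types (x z : R).

Lemma rising0 m : rising (0 : R) m = (m == 0)%:R.
Proof. by case: m => [|m]; rewrite /rising ?big_ord0 // big_ord_recl add0r mul0r. Qed.

Lemma risingSr x m : rising x m.+1 = rising x m * (x + m%:R).
Proof. by rewrite /rising big_ord_recr. Qed.

Lemma risingSl x m : rising x m.+1 = x * rising (x + 1) m.
Proof.
rewrite /rising big_ord_recl addr0; congr (_ * _).
by apply: eq_bigr => i _; rewrite lift0 -natr1 (addrC _ 1) addrA.
Qed.

Lemma rising_diff x m :
  rising (x + 1) m.+1 - rising x m.+1 = m.+1%:R * rising (x + 1) m.
Proof. by rewrite risingSr risingSl -natr1; ring. Qed.

Lemma rising_stirling1 x n :
  rising x n = (-1) ^+ n * \sum_(j < n.+1) (stirling1 n j)%:~R * (- x) ^+ j.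
Proof.
set P := \prod_(i < n) ('X - (i%:R : R)%:P).
have mapP : map_poly intr (\prod_(i < n) ('X - (i%:R : int)%:P)) = P.
  by rewrite map_prod_XsubC; apply: eq_bigr => i _; rewrite rmorph_nat.
have sizeP : size P = n.+1.
  by rewrite size_prod_XsubC /index_enum unlock -enumT size_enum_ord.
have -> : \sum_(j < n.+1) (stirling1 n j)%:~R * (- x) ^+ j = P.[- x].
  rewrite (horner_coef_wide _ (eq_leq sizeP)); apply: eq_bigr => j _.
  by rewrite -mapP coef_map.
rewrite horner_prod /rising.
under [LHS]eq_bigr => i _ do rewrite -[x + _]opprK -mulN1r opprD -hornerXsubC.
by rewrite big_split /= prodr_const card_ord.
Qed.

Lemma exprN_stirling2 x j :
  (- x) ^+ j = \sum_(m < j.+1) (stirling2 j m)%:R * ((-1) ^+ m * rising x m).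
Proof.
elim: j => [|j IHj]; first by rewrite big_ord1 /rising big_ord0 !mulr1.
have mulNx_rising m : - x * ((-1) ^+ m * rising x m) =
    (-1) ^+ m.+1 * rising x m.+1 + m%:R * ((-1) ^+ m * rising x m).
  by rewrite risingSr exprS; ring.
rewrite exprS IHj mulr_sumr.
under eq_bigr do rewrite mulrCA mulNx_rising mulrDr.
rewrite big_split /= [RHS]big_ord_recl mul0r add0r.
under [X in _ = X]eq_bigr do rewrite lift0 /= natrD natrM mulrDl -mulrA.
rewrite big_split /= addrC; congr (_ + _).
rewrite big_ord_recl [RHS]big_ord_recr (@stirling2_small j j.+1) //.
rewrite !(mul0r, mulr0) add0r /= addr0.
by apply: eq_bigr => i _; rewrite mulrCA.
Qed.
Definition rising_geo z (m k : nat) : R := rising (k%:R : R) m * z ^+ k.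

Lemma series_rising_geoS z m N :
  (1 - z) * series (rising_geo z m.+1) N.+1 =
  m.+1%:R * (series (rising_geo z m) N.+1 - rising 0 m)
  - rising (N%:R : R) m.+1 * z ^+ N.+1.
Proof.
elim: N => [|N IHN].
  by rewrite /series /= !big_nat1 /rising_geo !rising0 /=; ring.
rewrite seriesSr mulrDr IHN [series (rising_geo z m) N.+2]seriesSr /rising_geo.
have /eqP := rising_diff (N%:R : R) m; rewrite natr1 subr_eq => /eqP ->.
by rewrite [z ^+ N.+2]exprS; ring.
Qed.

End Rising.

Lemma rising_ge0 (R : numDomainType) (x : R) m : 0 <= x -> 0 <= rising x m.
Proof. by move=> x0; apply: prodr_ge0 => i _; rewrite addr_ge0. Qed.

Section RisingGeoSeries.
Context {R : realType}.
Implicit Types (p y z : R).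

Lemma norm_lt1_subr_neq0 z : `|z| < 1 -> 1 - z != 0.
Proof.
by move=> z1; rewrite subr_eq0 eq_sym; apply: contraTneq z1 => ->; rewrite normr1 ltxx.
Qed.

Lemma rising_geo0 z : rising_geo z 0 = geometric 1 z.
Proof.
by apply/funext => k; rewrite /rising_geo /rising big_ord0 /geometric /= !mul1r.
Qed.

Lemma series_rising_geo_bounded y m : 0 <= y < 1 ->
  exists B, forall N, series (rising_geo y m) N <= B.
Proof.
move=> /andP[y0 y1]; have y1_gt0 : 0 < 1 - y by rewrite subr_gt0.
elim: m => [|m [B leB]].
  exists (1 - y)^-1 => N; rewrite rising_geo0 geometric_seriesE ?lt_eqF //.
  rewrite /= mul1r -[leRHS]mul1r ler_pM2r ?invr_gt0 //.
  by rewrite lerBlDr lerDl exprn_ge0.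
have B0 : 0 <= B by apply: le_trans (leB 0%N); rewrite /series /= big_geq.
exists (m.+1%:R * B / (1 - y)) => -[|N].
  by rewrite /series /= big_geq // divr_ge0 ?mulr_ge0 // ltW.
rewrite ler_pdivlMr // mulrC series_rising_geoS.
have tail_ge0 : 0 <= rising (N%:R : R) m.+1 * y ^+ N.+1.
  by rewrite mulr_ge0 ?exprn_ge0 ?rising_ge0.
have : series (rising_geo y m) N.+1 - rising 0 m <= B.
  by rewrite lerBlDr (le_trans (leB _)) // lerDl rising_ge0.
move/(ler_wpM2l (ler0n R m.+1)); lra.
Qed.

Lemma rising_geo_cvg0 z m : `|z| < 1 -> rising_geo z m @ \oo --> 0.
Proof.
move=> z1; apply: norm_cvg0.
have -> : (fun k => `|rising_geo z m k|) = rising_geo `|z| m.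
  apply/funext => k; rewrite /rising_geo normrM normrX.
  by rewrite ger0_norm ?rising_ge0.
apply: cvg_series_cvg_0; apply: nondecreasing_is_cvgn.
  by apply: nondecreasing_series => k _ _; rewrite mulr_ge0 ?rising_ge0 ?exprn_ge0.
have [|B leB] := @series_rising_geo_bounded `|z| m; first by rewrite normr_ge0.
by exists B => _ [N _ <-].
Qed.

Definition rising_geo_lim z m : R :=
  if m is 0 then (1 - z)^-1 else m`!%:R * z / (1 - z) ^+ m.+1.

Lemma rising_geo_limS z m : 1 - z != 0 ->
  rising_geo_lim z m.+1 = m.+1%:R * (rising_geo_lim z m - rising 0 m) / (1 - z).
Proof.
move=> z1; rewrite rising0; case: m => [|m] /=.
  by rewrite expr2 mul1r; field.
by rewrite subr0 factS natrM exprS; field; rewrite z1 expf_neq0.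
Qed.

Lemma cvg_series_rising_geo z m : `|z| < 1 ->
  series (rising_geo z m) @ \oo --> rising_geo_lim z m.
Proof.
move=> z1; have z1_neq0 := norm_lt1_subr_neq0 z1.
elim: m => [|m IHm].
  by rewrite rising_geo0 -[rising_geo_lim z 0]mul1r; apply: cvg_geometric_series.
rewrite -cvg_shiftS (rising_geo_limS _ z1_neq0).
have -> : [sequence series (rising_geo z m.+1) N.+1]_N =
    (fun N => (m.+1%:R * (series (rising_geo z m) N.+1 - rising 0 m)
               - z * rising_geo z m.+1 N) / (1 - z)).
  apply/funext => N /=; apply: (mulIf z1_neq0); rewrite divfK // mulrC.
  by rewrite series_rising_geoS /rising_geo exprS mulrCA.
have -> : forall L, m.+1%:R * (L - rising 0 m) / (1 - z) =
    (m.+1%:R * (L - rising 0 m) - z * 0) / (1 - z) by move=> L; rewrite mulr0 subr0.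
apply: cvgMr_tmp; apply: cvgB; last by apply: cvgMl_tmp; apply: rising_geo_cvg0.
by apply: cvgMl_tmp; apply: cvgB; [rewrite cvg_shiftS | exact: cvg_cst].
Qed.

Lemma sum_stirling2_rising_geo_lim z j : 1 - z != 0 -> (0 < j)%N ->
  \sum_(m < j.+1) (stirling2 j m)%:R * ((-1) ^+ m * rising_geo_lim z m) =
  z / (1 - z) * geom_poly j (- (1 - z)^-1).
Proof.
move=> z1; case: j => // j _.
rewrite /geom_poly big_mkord [LHS]big_ord_recl [in RHS]big_ord_recl mul0n !mul0r !add0r.
rewrite mulr_sumr.
apply: eq_bigr => m _; rewrite lift0 [rising_geo_lim _ _]/= natrM.
rewrite [(- _^-1) ^+ _]exprNn exprVn [(1 - z) ^+ m.+2]exprS.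
by field; rewrite z1 expf_neq0.
Qed.

Lemma cvg_series_natr_pow_geo z j : `|z| < 1 -> (0 < j)%N ->
  series (fun k => k%:R ^+ j * z ^+ k) @ \oo -->
    (-1) ^+ j * (z / (1 - z)) * geom_poly j (- (1 - z)^-1).
Proof.
move=> z1 j_gt0; have z1_neq0 := norm_lt1_subr_neq0 z1.
have pow_expand k : k%:R ^+ j * z ^+ k =
    (-1) ^+ j * \sum_(m < j.+1) (stirling2 j m)%:R * ((-1) ^+ m * rising_geo z m k).
  have -> : k%:R ^+ j = (-1) ^+ j * (- k%:R) ^+ j :> R by rewrite -exprMn mulN1r opprK.
  rewrite (exprN_stirling2 (k%:R : R)) -mulrA mulr_suml.
  by congr (_ * _); apply: eq_bigr => m _; rewrite /rising_geo !mulrA.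
have -> : series (fun k => k%:R ^+ j * z ^+ k) = fun N => (-1) ^+ j *
    \sum_(m < j.+1) (stirling2 j m)%:R * ((-1) ^+ m * series (rising_geo z m) N).
  apply/funext => N; rewrite seriesEord /=; under eq_bigr do rewrite pow_expand.
  rewrite -mulr_sumr exchange_big; congr (_ * _); apply: eq_bigr => m _.
  by rewrite seriesEord /= -!mulr_sumr.
rewrite -mulrA -(sum_stirling2_rising_geo_lim z1_neq0 j_gt0); apply: cvgMl_tmp.
apply: cvg_big => // [|m _]; first exact: add_continuous.
by apply: cvgMl_tmp; apply: cvgMl_tmp; exact: cvg_series_rising_geo.
Qed.

Lemma cvg_series_rising_geo_stirling p z n :
  `|z| < 1 -> (0 < n)%N ->
  series (fun k => rising (- (p * k%:R)) n * z ^+ k) @ \oo -->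
    (-1) ^+ n * (z / (1 - z)) *
    \sum_(1 <= j < n.+1) (stirling1 n j)%:~R * (- p) ^+ j * geom_poly j (- (1 - z)^-1).
Proof.
move=> z1 n_gt0.
have -> : series (fun k => rising (- (p * k%:R)) n * z ^+ k) = fun N => (-1) ^+ n *
    \sum_(j < n.+1)
      (stirling1 n j)%:~R * (p ^+ j * series (fun k => k%:R ^+ j * z ^+ k) N).
  apply/funext => N; rewrite seriesEord /=.
  under eq_bigr do rewrite rising_stirling1 opprK -mulrA mulr_suml.
  rewrite -mulr_sumr exchange_big; congr (_ * _); apply: eq_bigr => j _.
  rewrite seriesEord /= !mulr_sumr; apply: eq_bigr => k _.
  by rewrite exprMn !mulrA.
set lim_j := fun j : nat => (-1) ^+ j * (z / (1 - z)) * geom_poly j (- (1 - z)^-1).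
have -> : (-1) ^+ n * (z / (1 - z)) *
    \sum_(1 <= j < n.+1) (stirling1 n j)%:~R * (- p) ^+ j * geom_poly j (- (1 - z)^-1) =
    (-1) ^+ n * \sum_(j < n.+1) (stirling1 n j)%:~R * (p ^+ j * lim_j j).
  rewrite [in RHS]big_ord_recl stirling1_n0 // mul0r add0r big_add1 big_mkord.
  rewrite -mulrA !mulr_sumr.
  by apply: eq_bigr => j _; rewrite lift0 /lim_j /= [(- p) ^+ _]exprNn; ring.
apply: cvgMl_tmp; apply: cvg_big => // [|j _]; first exact: add_continuous.
have [j0|j_gt0] := posnP j.
  rewrite j0 stirling1_n0 // mul0r; under eq_fun do rewrite mul0r; exact: cvg_cst.
by apply: cvgMl_tmp; apply: cvgMl_tmp; exact: cvg_series_natr_pow_geo.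
Qed.
End RisingGeoSeries.

Theorem mainTheorem3 (R : realType) (p y : R) (n : nat) :
  0 < p < 1 -> 0 <= y < 1 -> (1 <= n)%N ->
  let Q := series (fun k : nat => rising (- (p * k%:R)) n * (- y) ^+ k) in
  (Q i @[i --> \oo] --> (-1) ^+ n.+1 * (y / (y + 1)) *
     \sum_(1 <= k < n.+1) (stirling1 n k)%:~R * (- p) ^+ k *
       \sum_(1 <= m < k.+1) (stirling2 k m * m`!)%:R * (- (y + 1)^-1) ^+ m)
  /\
  (Q i @[i --> \oo] --> (-1) ^+ n.+1 * (y / (y + 1)) *
     \sum_(1 <= k < n.+1) (stirling1 n k)%:~R * (- p) ^+ k *
       geom_poly k (- (y + 1)^-1)).
Proof.
(* The identity holds for every p. *)
move=> _ /andP[y_ge0 y_lt1] n_gt0 Q.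
have Ny_lt1 : `|- y| < 1 by rewrite normrN ger0_norm.
have := cvg_series_rising_geo_stirling (p := p) Ny_lt1 n_gt0.
rewrite opprK [1 + y]addrC mulNr mulrN -mulNr -mulN1r -exprS => lim_Q.
split=> //; under eq_big_nat => k /andP[k_gt0 _] do rewrite -geom_polyE //.
exact: lim_Q.
Qed.
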